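(* Consider problem (P) and suppose Assumptions A and B hold. Let $\{(x^t,L_g^t)\}$ be generated by SCP$_{ls}$. Then: (i) $\{x^t\}$ is bounded; (ii) the sequence $\{\bar F(x^{t+1},x^t,L_g^t)\}$ is nonincreasing and converges to some real number $\bar F^*$, and for all $t\ge1$, $\bar F(x^{t+1},x^t,L_g^t)\le\bar F(x^t,x^{t-1},L_g^{t-1})-\frac c2\|x^{t+1}-x^t\|^2$; (iii) $\lim_{t\to\infty}\|x^{t+1}-x^t\|=0$.
   Context: Problem (P): $\min_{x\in\mathbb R^n}F(x):=f(x)+P_1(x)-P_2(x)+\delta_{\{g\le 0\}}(x)$, where $f:\mathbb R^n\to\mathbb R$ is continuously differentiable, $P_1,P_2:\mathbb R^n\to\mathbb R$ are convex and continuous, $g=(g_1,\dots,g_m):\mathbb R^n\to\mathbb R^m$ is continuous with $\{x:g(x)\le0\}\neq\emptyset$ (componentwise inequalities), $\delta_C$ the indicator function of $C$. Assumption A: (i) $\nabla f$ is Lipschitz with modulus $L_f$; (ii) each $g_i$ is differentiable with $\nabla g_i$ Lipschitz with modulus $L_{g_i}$; (iii) $F$ is level-bounded. Assumption B (MFCQ): each $g_i$ is continuously differentiable and for every $x$ with $g(x)\le0$ there is $d$ with $\langle\nabla g_i(x),d\rangle<0$ for all $i\in I(x):=\{j:g_j(x)=0\}$. $\bar G(x,y,w)\in\mathbb R^m$ ($x,y\in\mathbb R^n,w\in\mathbb R^m$) has components $\bar G_i(x,y,w)=g_i(y)+\langle\nabla g_i(y),x-y\rangle+\frac{w_i}{2}\|x-y\|^2$,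 and $\bar F(x,y,w):=f(x)+P_1(x)-P_2(x)+\delta_{\{\bar G\le0\}}(x,y,w)$. Algorithm SCP$_{ls}$: fix $c>0$, $0<\underline L<\bar L$, $\tau>1$ and $x^0$ with $g(x^0)\le0$. For $t=0,1,2,\dots$: (1) pick any $\xi^t\in\partial P_2(x^t)$; (2) choose $L_f^{t,0}\in[\underline L,\bar L]$, $L_g^{t,0}\in[\underline L,\bar L]^m$ arbitrarily, set $\tilde L_f=L_f^{t,0}$, $\tilde L_g=L_g^{t,0}$; (3) compute $\tilde x$ solving: minimize $\langle\nabla f(x^t)-\xi^t,x-x^t\rangle+\frac{\tilde L_f}{2}\|x-x^t\|^2+P_1(x)$ subject to $\bar G(x,x^t,\tilde L_g)\le0$. If $g(\tilde x)\le0$ and $F(\tilde x)\le F(x^t)-\frac c2\|\tilde x-x^t\|^2$, set $x^{t+1}=\tilde x$, $L_f^t=\tilde L_f$, $L_g^t=\tilde L_g$ and go to iteration $t+1$; otherwise, if $g(\tilde x)\not\le0$ replace $\tilde L_g$ by $\tau\tilde L_g$, while if $g(\tilde x)\le0$ but the decrease inequality fails replace $\tilde L_f$ by $\tau\tilde L_f$, and repeat step (3). (Under Assumptions A and B this algorithm is well defined and produces infinite sequences.) *)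

From Stdlib Require Import Reals Lra Lia ClassicalEpsilon.
From Stdlib Require Fin.
Open Scope R_scope.

Definition vec (n : nat) : Type := Fin.t n -> R.

Definition vadd {n} (x y : vec n) : vec n := fun i => x i + y i.
Definition vsub {n} (x y : vec n) : vec n := fun i => x i - y i.
Definition vscale {n} (a : R) (x : vec n) : vec n := fun i => a * x i.

Fixpoint dot (n : nat) : vec n -> vec n -> R :=
  match n return vec n -> vec n -> R with
  | O => fun _ _ => 0
  | S m => fun x y => x Fin.F1 * y Fin.F1
                      + dot m (fun i => x (Fin.FS i)) (fun i => y (Fin.FS i))
  end.
Arguments dot {n} x y.

Definition norm2 {n} (x : vec n) : R := dot x x.
Definition norm {n} (x : vec n) : R := sqrt (dot x x).

Definition has_gradient {n} (h : vec n -> R) (G : vec n) (x : vec n) : Prop :=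
  forall eps, 0 < eps -> exists delta, 0 < delta /\
    forall d : vec n, norm d < delta ->
      Rabs (h (vadd x d) - h x - dot G d) <= eps * norm d.

Definition continuous_fun {n} (h : vec n -> R) : Prop :=
  forall x eps, 0 < eps -> exists delta, 0 < delta /\
    forall y, norm (vsub y x) < delta -> Rabs (h y - h x) < eps.

Definition continuous_vfun {n} (G : vec n -> vec n) : Prop :=
  forall x eps, 0 < eps -> exists delta, 0 < delta /\
    forall y, norm (vsub y x) < delta -> norm (vsub (G y) (G x)) < eps.

Definition lipschitz_vfun {n} (G : vec n -> vec n) (L : R) : Prop :=
  forall x y, norm (vsub (G x) (G y)) <= L * norm (vsub x y).

Definition convex_fun {n} (h : vec n -> R) : Prop :=
  forall x y lam, 0 <= lam <= 1 ->
    h (vadd (vscale lam x) (vscale (1 - lam) y)) <= lam * h x + (1 - lam) * h y.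

Definition in_subdiff {n} (h : vec n -> R) (x xi : vec n) : Prop :=
  forall y, h y >= h x + dot xi (vsub y x).

Definition feasible {n m} (g : Fin.t m -> vec n -> R) (x : vec n) : Prop :=
  forall i, g i x <= 0.

(* the finite part f + P1 - P2 of F *)
Definition Fval {n} (f P1 P2 : vec n -> R) (x : vec n) : R := f x + P1 x - P2 x.

Definition Gbar {n m} (g : Fin.t m -> vec n -> R) (gg : Fin.t m -> vec n -> vec n)
  (x y : vec n) (w : Fin.t m -> R) (i : Fin.t m) : R :=
  g i y + dot (gg i y) (vsub x y) + w i / 2 * norm2 (vsub x y).

Inductive ER : Type := ERfin : R -> ER | ERinf : ER.

Definition ER_le (a b : ER) : Prop :=
  match a, b with
  | _, ERinf => True
  | ERinf, ERfin _ => False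
  | ERfin x, ERfin y => x <= y
  end.

Definition ER_subR (a : ER) (r : R) : ER :=
  match a with ERfin x => ERfin (x - r) | ERinf => ERinf end.

Definition ER_cv (u : nat -> ER) (l : R) : Prop :=
  forall eps, 0 < eps -> exists N, forall t, (N <= t)%nat ->
    exists r, u t = ERfin r /\ Rabs (r - l) < eps.

Definition Fbar {n m} (f P1 P2 : vec n -> R) (g : Fin.t m -> vec n -> R)
  (gg : Fin.t m -> vec n -> vec n) (x y : vec n) (w : Fin.t m -> R) : ER :=
  if excluded_middle_informative (forall i, Gbar g gg x y w i <= 0)
  then ERfin (Fval f P1 P2 x) else ERinf.

Definition subobj {n} (gradf : vec n -> vec n) (P1 : vec n -> R)
  (xt xi : vec n) (Lf : R) (x : vec n) : R :=
  dot (vsub (gradf xt) xi) (vsub x xt) + Lf / 2 * norm2 (vsub x xt) + P1 x.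

Definition solves_sub {n m} (gradf : vec n -> vec n) (P1 : vec n -> R)
  (g : Fin.t m -> vec n -> R) (gg : Fin.t m -> vec n -> vec n)
  (xt xi : vec n) (Lf : R) (Lg : Fin.t m -> R) (z : vec n) : Prop :=
  (forall i, Gbar g gg z xt Lg i <= 0) /\
  forall y, (forall i, Gbar g gg y xt Lg i <= 0) ->
    subobj gradf P1 xt xi Lf z <= subobj gradf P1 xt xi Lf y.

Definition accepted {n m} (f P1 P2 : vec n -> R) (g : Fin.t m -> vec n -> R)
  (c : R) (xt z : vec n) : Prop :=
  feasible g z /\ Fval f P1 P2 z <= Fval f P1 P2 xt - c / 2 * norm2 (vsub z xt).

(* One outer iteration t of SCP_ls: from xt with chosen xi, the inner line search
   (trial parameters Lfs k, Lgs k and trial points xs k, k = 0..K) ends with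
   acceptance at k = K, producing x_next, Lf_t, Lg_t. *)
Definition SCP_ls_iter {n m} (f : vec n -> R) (gradf : vec n -> vec n)
  (P1 P2 : vec n -> R) (g : Fin.t m -> vec n -> R) (gg : Fin.t m -> vec n -> vec n)
  (c Llo Lhi tau : R) (xt xi x_next : vec n) (Lf_t : R) (Lg_t : Fin.t m -> R) : Prop :=
  exists (K : nat) (Lfs : nat -> R) (Lgs : nat -> Fin.t m -> R) (xs : nat -> vec n),
    Llo <= Lfs O <= Lhi /\
    (forall i, Llo <= Lgs O i <= Lhi) /\
    (forall k, (k <= K)%nat -> solves_sub gradf P1 g gg xt xi (Lfs k) (Lgs k) (xs k)) /\
    (forall k, (k < K)%nat ->
       ~ accepted f P1 P2 g c xt (xs k) /\
       ((~ feasible g (xs k) /\ Lfs (S k) = Lfs k /\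
           forall i, Lgs (S k) i = tau * Lgs k i) \/
        (feasible g (xs k) /\ Lfs (S k) = tau * Lfs k /\
           forall i, Lgs (S k) i = Lgs k i))) /\
    accepted f P1 P2 g c xt (xs K) /\
    x_next = xs K /\ Lf_t = Lfs K /\ (forall i, Lg_t i = Lgs K i).

(* Every accepted step of SCP_ls is feasible for the convexified constraints,
   so Fbar(x^{t+1}, x^t, L_g^t) = F(x^{t+1}), and the acceptance test makes
   F(x^t) decrease by at least c/2 ||x^{t+1} - x^t||^2.  Level-boundedness then
   bounds {x^t}; a convergent subsequence x^{phi k} -> l and continuity of F
   show that the nonincreasing sequence F(x^t) converges (to F(l)), and
   summing the decrease gives ||x^{t+1} - x^t|| -> 0. *)
From Stdlib Require Import Reals Lra Lia ClassicalEpsilon FunctionalExtensionality.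
From Stdlib Require Fin.
Open Scope R_scope.

Lemma dot_self_nonneg n (x : vec n) : 0 <= dot x x.
Proof.
  induction n as [|n IH]; simpl; [lra|].
  specialize (IH (fun i => x (Fin.FS i))). nra.
Qed.

Lemma norm2_nonneg n (x : vec n) : 0 <= norm2 x.
Proof. apply dot_self_nonneg. Qed.

Lemma norm_nonneg n (x : vec n) : 0 <= norm x.
Proof. apply sqrt_pos. Qed.

Lemma norm2_eq_sqr_norm n (x : vec n) : norm2 x = norm x * norm x.
Proof. unfold norm, norm2. rewrite sqrt_sqrt; [reflexivity | apply dot_self_nonneg]. Qed.

Lemma norm_lt_of_norm2_lt n (x : vec n) e : 0 < e -> norm2 x < e * e -> norm x < e.
Proof.
  intros He Hx. rewrite norm2_eq_sqr_norm in Hx. pose proof (norm_nonneg n x). nra.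
Qed.

Lemma dot_sqr_le n (a b : vec n) : dot a b * dot a b <= dot a a * dot b b.
Proof.
  induction n as [|n IH]; simpl; [lra|].
  specialize (IH (fun i => a (Fin.FS i)) (fun i => b (Fin.FS i))).
  pose proof (dot_self_nonneg n (fun i => a (Fin.FS i))).
  pose proof (dot_self_nonneg n (fun i => b (Fin.FS i))).
  set (a0 := a Fin.F1) in *. set (b0 := b Fin.F1) in *.
  set (r := dot (fun i => a (Fin.FS i)) (fun i => b (Fin.FS i))) in *.
  set (A := dot (fun i => a (Fin.FS i)) (fun i => a (Fin.FS i))) in *.
  set (B := dot (fun i => b (Fin.FS i)) (fun i => b (Fin.FS i))) in *.
  (* the cross term: (a0 b0 r)^2 <= (a0^2 B)(A b0^2), then AM-GM *)
  assert (Hcross : 2 * (a0 * b0 * r) <= a0 * a0 * B + A * (b0 * b0)).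
  { assert (Hprod : (a0 * b0 * r) * (a0 * b0 * r) <= (a0 * a0 * B) * (A * (b0 * b0))).
    { replace ((a0 * a0 * B) * (A * (b0 * b0))) with ((a0 * b0) * (a0 * b0) * (A * B)) by ring.
      replace ((a0 * b0 * r) * (a0 * b0 * r)) with ((a0 * b0) * (a0 * b0) * (r * r)) by ring.
      apply Rmult_le_compat_l; [nra | exact IH]. }
    set (X := a0 * b0 * r) in *. set (P := a0 * a0 * B) in *. set (Q := A * (b0 * b0)) in *.
    assert (HP : 0 <= P) by (unfold P; nra). assert (HQ : 0 <= Q) by (unfold Q; nra).
    clearbody X P Q. clear - Hprod HP HQ.
    destruct (Rle_or_lt (2 * X) (P + Q)) as [Hle | Hlt]; [exact Hle|].
    pose proof (Rle_0_sqr (P - Q)). unfold Rsqr in *.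
    nra. }
  nra.
Qed.

Lemma Rabs_dot_le n (a b : vec n) : Rabs (dot a b) <= norm a * norm b.
Proof.
  unfold norm. rewrite <- sqrt_mult by apply dot_self_nonneg.
  rewrite <- sqrt_Rsqr_abs. apply sqrt_le_1_alt. apply dot_sqr_le.
Qed.

Lemma vadd_vsub n (x y : vec n) : vadd x (vsub y x) = y.
Proof. apply functional_extensionality. intro i. unfold vadd, vsub. ring. Qed.

Lemma has_gradient_continuous n (h : vec n -> R) (G : vec n -> vec n) :
  (forall x, has_gradient h (G x) x) -> continuous_fun h.
Proof.
  intros Hgrad x eps Heps.
  destruct (Hgrad x 1 ltac:(lra)) as [d1 [Hd1 Hd]].
  pose proof (norm_nonneg n (G x)) as HG.
  exists (Rmin d1 (eps / (norm (G x) + 1) / 2)). split.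
  { apply Rmin_glb_lt; [lra|]. apply Rdiv_lt_0_compat; [|lra]. apply Rdiv_lt_0_compat; lra. }
  intros y Hy. set (d := vsub y x) in *.
  assert (Hy1 : norm d < d1) by (eapply Rlt_le_trans; [exact Hy | apply Rmin_l]).
  assert (Hy2 : (norm (G x) + 1) * norm d < eps / 2).
  { assert (H2 : norm d < eps / (norm (G x) + 1) / 2)
      by (eapply Rlt_le_trans; [exact Hy | apply Rmin_r]).
    apply (Rmult_lt_compat_l (norm (G x) + 1)) in H2; [|lra].
    replace ((norm (G x) + 1) * (eps / (norm (G x) + 1) / 2)) with (eps / 2) in H2
      by (field; lra). exact H2. }
  specialize (Hd d Hy1). unfold d in Hd. rewrite vadd_vsub in Hd. fold d in Hd.
  pose proof (Rabs_dot_le n (G x) d). pose proof (norm_nonneg n d).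
  pose proof (Rabs_triang (h y - h x - dot (G x) d) (dot (G x) d)) as Htri.
  replace (h y - h x - dot (G x) d + dot (G x) d) with (h y - h x) in Htri by ring.
  nra.
Qed.

Lemma continuous_fun_combine n (h1 h2 : vec n -> R) (op : R -> R -> R) :
  (forall a1 a2 b1 b2, Rabs (op a1 a2 - op b1 b2) <= Rabs (a1 - b1) + Rabs (a2 - b2)) ->
  continuous_fun h1 -> continuous_fun h2 -> continuous_fun (fun x => op (h1 x) (h2 x)).
Proof.
  intros Hop H1 H2 x eps Heps.
  destruct (H1 x (eps / 2) ltac:(lra)) as [d1 [Hd1 Hc1]].
  destruct (H2 x (eps / 2) ltac:(lra)) as [d2 [Hd2 Hc2]].
  exists (Rmin d1 d2). split; [apply Rmin_glb_lt; lra|].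
  intros y Hy.
  specialize (Hc1 y (Rlt_le_trans _ _ _ Hy (Rmin_l _ _))).
  specialize (Hc2 y (Rlt_le_trans _ _ _ Hy (Rmin_r _ _))).
  specialize (Hop (h1 y) (h2 y) (h1 x) (h2 x)). lra.
Qed.

Lemma continuous_Fval n (f P1 P2 : vec n -> R) :
  continuous_fun f -> continuous_fun P1 -> continuous_fun P2 ->
  continuous_fun (Fval f P1 P2).
Proof.
  intros Hf H1 H2.
  apply (continuous_fun_combine n (fun x => f x + P1 x) P2 Rminus).
  - intros. replace (a1 - a2 - (b1 - b2)) with ((a1 - b1) + - (a2 - b2)) by ring.
    rewrite <- (Rabs_Ropp (a2 - b2)). apply Rabs_triang.
  - apply (continuous_fun_combine n f P1 Rplus); [|assumption..].
    intros. replace (a1 + a2 - (b1 + b2)) with ((a1 - b1) + (a2 - b2)) by ring.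
    apply Rabs_triang.
  - exact H2.
Qed.

Lemma continuous_fun_seq n (h : vec n -> R) (y : nat -> vec n) (l : vec n) :
  continuous_fun h -> Un_cv (fun k => norm2 (vsub (y k) l)) 0 ->
  Un_cv (fun k => h (y k)) (h l).
Proof.
  intros Hh Hy eps Heps.
  destruct (Hh l eps Heps) as [d [Hd Hc]].
  destruct (Hy (d * d) ltac:(nra)) as [N HN].
  exists N. intros k Hk. apply Hc, norm_lt_of_norm2_lt; [exact Hd|].
  specialize (HN k Hk). unfold R_dist in HN.
  rewrite Rminus_0_r, Rabs_pos_eq in HN by apply norm2_nonneg. exact HN.
Qed.

Definition increasing_nat (phi : nat -> nat) : Prop := forall k, (phi k < phi (S k))%nat.

Lemma increasing_nat_lt phi : increasing_nat phi -> forall a b, (a < b)%nat -> (phi a < phi b)%nat.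
Proof. intros Hphi a b Hab. induction Hab; [apply Hphi | specialize (Hphi m); lia]. Qed.

Lemma increasing_nat_ge phi : increasing_nat phi -> forall k, (k <= phi k)%nat.
Proof. intros Hphi k. induction k; [lia | specialize (Hphi k); lia]. Qed.

Lemma increasing_nat_comp phi psi :
  increasing_nat phi -> increasing_nat psi -> increasing_nat (fun k => phi (psi k)).
Proof. intros Hphi Hpsi k. apply increasing_nat_lt; [exact Hphi | apply Hpsi]. Qed.

Lemma Un_cv_subseq (u : nat -> R) l phi :
  increasing_nat phi -> Un_cv u l -> Un_cv (fun k => u (phi k)) l.
Proof.
  intros Hphi Hu eps Heps. destruct (Hu eps Heps) as [N HN].
  exists N. intros k Hk. apply HN. pose proof (increasing_nat_ge phi Hphi k). lia.
Qed.

Lemma bounded_seq_cv_subseq (u : nat -> R) M :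
  (forall k, Rabs (u k) <= M) ->
  exists phi l, increasing_nat phi /\ Un_cv (fun k => u (phi k)) l.
Proof.
  intros HM.
  destruct (Bolzano_Weierstrass u (fun r => -M <= r <= M) (compact_P3 (-M) M)) as [l Hl].
  { intro k. specialize (HM k). unfold Rabs in HM. destruct (Rcase_abs (u k)); lra. }
  assert (Hclose : forall Nk : nat * nat, exists p,
            (fst Nk <= p)%nat /\ Rabs (u p - l) < / INR (S (snd Nk))).
  { intros [N k].
    assert (Hpos : 0 < / INR (S k)) by (apply Rinv_0_lt_compat, lt_0_INR; lia).
    destruct (Hl (disc l (mkposreal _ Hpos)) N) as [p Hp].
    { exists (mkposreal _ Hpos). intros r Hr. exact Hr. }
    exists p. exact Hp. }
  destruct (choice _ Hclose) as [pick Hpick].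
  (* phi (k+1) is chosen past phi k and 1/(k+2)-close to l *)
  set (phi := fix phi k := match k with
                           | O => pick (O, O)
                           | S k' => pick (S (phi k'), S k')
                           end).
  exists phi, l. split.
  { intro k. simpl. destruct (Hpick (S (phi k), S k)) as [Hge _]. simpl in Hge. lia. }
  intros eps Heps. destruct (archimed_cor1 eps Heps) as [N [HN HN0]].
  exists N. intros k Hk. unfold R_dist.
  assert (Hk' : Rabs (u (phi k) - l) < / INR (S k))
    by (destruct k; [apply (Hpick (O, O)) | apply (Hpick (S (phi k), S k))]).
  assert (/ INR (S k) <= / INR N).
  { apply Rinv_le_contravar; [apply lt_0_INR; exact HN0 | apply le_INR; lia]. }
  lra.
Qed.

Lemma bounded_vec_seq_cv_subseq n :
  forall (u : nat -> vec n) M, (forall k, norm2 (u k) <= M) ->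
  exists phi l, increasing_nat phi /\ Un_cv (fun k => norm2 (vsub (u (phi k)) l)) 0.
Proof.
  induction n as [|n IH]; intros u M HM.
  - exists (fun k => k), (fun _ => 0). split; [intro; lia|].
    intros eps Heps. exists O. intros k _. unfold R_dist, norm2. simpl.
    rewrite Rminus_0_r, Rabs_R0. exact Heps.
  - assert (Hhead : forall k, Rabs (u k Fin.F1) <= M + 1).
    { intro k. specialize (HM k). unfold norm2 in HM. simpl in HM.
      pose proof (dot_self_nonneg n (fun i => u k (Fin.FS i))).
      apply Rabs_le. nra. }
    destruct (bounded_seq_cv_subseq _ _ Hhead) as [phi1 [l0 [Hphi1 Hcv1]]].
    destruct (IH (fun k i => u (phi1 k) (Fin.FS i)) M) as [phi2 [l' [Hphi2 Hcv2]]].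
    { intro k. specialize (HM (phi1 k)). unfold norm2 in *. simpl in HM. nra. }
    exists (fun k => phi1 (phi2 k)), (fun i => Fin.caseS' i (fun _ => R) l0 l').
    split; [apply increasing_nat_comp; assumption|].
    assert (Hcv0 : Un_cv (fun k => u (phi1 (phi2 k)) Fin.F1 - l0) 0).
    { intros eps Heps. destruct (Un_cv_subseq _ _ _ Hphi2 Hcv1 eps Heps) as [N HN].
      exists N. intros k Hk. unfold R_dist. rewrite Rminus_0_r. apply HN, Hk. }
    pose proof (CV_plus _ _ _ _ (CV_mult _ _ _ _ Hcv0 Hcv0) Hcv2) as Hsum.
    rewrite Rmult_0_r, Rplus_0_r in Hsum. exact Hsum.
Qed.

Lemma Un_decreasing_subseq_cv (u : nat -> R) phi l :
  Un_decreasing u -> increasing_nat phi -> Un_cv (fun k => u (phi k)) l -> Un_cv u l.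
Proof.
  intros Hdec Hphi Hcv.
  assert (Hmono : forall a b, (a <= b)%nat -> u b <= u a).
  { intros a b Hab. induction Hab; [lra | specialize (Hdec m); lra]. }
  assert (Hlb : forall t, l <= u t).
  { intro t. apply Rnot_lt_le. intro Hlt.
    destruct (Hcv (l - u t) ltac:(lra)) as [N HN].
    specialize (HN (max N t) (Nat.le_max_l _ _)). unfold R_dist in HN.
    pose proof (Hmono t (phi (max N t))
                  (Nat.le_trans _ _ _ (Nat.le_max_r N t) (increasing_nat_ge phi Hphi _))).
    apply Rabs_def2 in HN. lra. }
  intros eps Heps. destruct (Hcv eps Heps) as [N HN].
  exists (phi N). intros t Ht. specialize (HN N (le_n N)). unfold R_dist in *.
  specialize (Hmono _ _ Ht). specialize (Hlb t).
  apply Rabs_def2 in HN. rewrite Rabs_pos_eq by lra. lra.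
Qed.

Lemma Un_cv_0_of_sqr_le_diff (u w : nat -> R) l c :
  0 < c -> Un_cv u l -> (forall t, 0 <= w t) ->
  (forall t, c * (w t * w t) <= u t - u (S t)) -> Un_cv w 0.
Proof.
  intros Hc Hu Hw Hstep eps Heps.
  assert (Hpos : 0 < c / 2 * (eps * eps))
    by (apply Rmult_lt_0_compat; [lra | apply Rmult_lt_0_compat; exact Heps]).
  destruct (Hu _ Hpos) as [N HN].
  exists N. intros t Ht.
  pose proof (HN t Ht) as H1. pose proof (HN (S t) ltac:(lia)) as H2.
  unfold R_dist in *. apply Rabs_def2 in H1. apply Rabs_def2 in H2.
  specialize (Hstep t). specialize (Hw t).
  rewrite Rminus_0_r, Rabs_pos_eq by exact Hw.
  assert (Hsq : w t * w t < eps * eps).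
  { apply (Rmult_lt_reg_l c); [exact Hc | lra]. }
  nra.
Qed.

Lemma SCP_ls_iter_accepted {n m} {f : vec n -> R} {gradf P1 P2}
  {g : Fin.t m -> vec n -> R} {gg c Llo Lhi tau xt xi x_next Lf_t Lg_t} :
  SCP_ls_iter f gradf P1 P2 g gg c Llo Lhi tau xt xi x_next Lf_t Lg_t ->
  accepted f P1 P2 g c xt x_next /\ forall i, Gbar g gg x_next xt Lg_t i <= 0.
Proof.
  intros [K [Lfs [Lgs [xs [_ [_ [Hsol [_ [Hacc [-> [_ HLg]]]]]]]]]]].
  split; [exact Hacc|].
  intro i. destruct (Hsol K (le_n K)) as [HG _].
  unfold Gbar. rewrite HLg. apply HG.
Qed.

Lemma Fbar_feasible n m (f P1 P2 : vec n -> R) (g : Fin.t m -> vec n -> R) gg x y w :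
  (forall i, Gbar g gg x y w i <= 0) -> Fbar f P1 P2 g gg x y w = ERfin (Fval f P1 P2 x).
Proof.
  intros HG. unfold Fbar.
  destruct (excluded_middle_informative _) as [_ | Hn]; [reflexivity | contradiction].
Qed.
Theorem mainTheorem2 (n m : nat)
  (f : vec n -> R) (gradf : vec n -> vec n)
  (P1 P2 : vec n -> R)
  (g : Fin.t m -> vec n -> R) (gg : Fin.t m -> vec n -> vec n)
  (Hf_diff : forall x, has_gradient f (gradf x) x)
  (Hf_C1 : continuous_vfun gradf)
  (HP1_cvx : convex_fun P1) (HP1_cont : continuous_fun P1)
  (HP2_cvx : convex_fun P2) (HP2_cont : continuous_fun P2)
  (Hg_cont : forall i, continuous_fun (g i))
  (Hfeas_ne : exists x, feasible g x)
  (* Assumption A *)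
  (HA1 : exists Lf0, lipschitz_vfun gradf Lf0)
  (HA2 : forall i, (forall x, has_gradient (g i) (gg i x) x) /\
                   exists Lgi, lipschitz_vfun (gg i) Lgi)
  (HA3 : forall alpha, exists M, forall x,
           feasible g x -> Fval f P1 P2 x <= alpha -> norm x <= M)
  (* Assumption B *)
  (HB_C1 : forall i, continuous_vfun (gg i))
  (HB_MFCQ : forall x, feasible g x -> exists d : vec n,
               forall i, g i x = 0 -> dot (gg i x) d < 0)
  (c Llo Lhi tau : R) (Hc : 0 < c) (HL : 0 < Llo < Lhi) (Htau : 1 < tau)
  (x : nat -> vec n) (xi : nat -> vec n) (Lf : nat -> R) (Lg : nat -> Fin.t m -> R)
  (Hx0 : feasible g (x O))
  (Hxi : forall t, in_subdiff P2 (x t) (xi t))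
  (Hiter : forall t, SCP_ls_iter f gradf P1 P2 g gg c Llo Lhi tau
                       (x t) (xi t) (x (S t)) (Lf t) (Lg t)) :
  (* (i) *)
  (exists M, forall t, norm (x t) <= M) /\
  (* (ii) *)
  ((forall t, ER_le (Fbar f P1 P2 g gg (x (S (S t))) (x (S t)) (Lg (S t)))
                    (Fbar f P1 P2 g gg (x (S t)) (x t) (Lg t))) /\
   (exists Fstar : R, ER_cv (fun t => Fbar f P1 P2 g gg (x (S t)) (x t) (Lg t)) Fstar) /\
   (forall t, (1 <= t)%nat ->
      ER_le (Fbar f P1 P2 g gg (x (S t)) (x t) (Lg t))
            (ER_subR (Fbar f P1 P2 g gg (x t) (x (pred t)) (Lg (pred t)))
                     (c / 2 * norm2 (vsub (x (S t)) (x t)))))) /\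
  (* (iii) *)
  Un_cv (fun t => norm (vsub (x (S t)) (x t))) 0.
Proof.
  (* The Lipschitz, MFCQ and convexity hypotheses only ensure that the line
     search terminates, which Hiter already provides. *)
  set (a := fun t => Fval f P1 P2 (x t)).
  pose proof (fun t => SCP_ls_iter_accepted (Hiter t)) as Hacc.
  assert (Hfeas : forall t, feasible g (x t)) by (intros [|t]; [exact Hx0 | apply Hacc]).
  assert (Hdescent : forall t, c / 2 * norm2 (vsub (x (S t)) (x t)) <= a t - a (S t))
    by (intro t; destruct (Hacc t) as [[_ Hd] _]; unfold a; lra).
  assert (Hdec : Un_decreasing a).
  { intro t. specialize (Hdescent t).
    pose proof (Rmult_le_pos (c / 2) _ ltac:(lra) (norm2_nonneg n (vsub (x (S t)) (x t)))).
    lra. }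
  assert (HFbar : forall t, Fbar f P1 P2 g gg (x (S t)) (x t) (Lg t) = ERfin (a (S t)))
    by (intro t; apply Fbar_feasible, Hacc).
  destruct (HA3 (a O)) as [M HM].
  assert (Hbd : forall t, norm (x t) <= M).
  { intro t. apply HM; [apply Hfeas|]. change (a t <= a O).
    induction t as [|t IH]; [lra | specialize (Hdec t); lra]. }
  destruct (bounded_vec_seq_cv_subseq n x (M * M)) as [phi [l [Hphi Hcvx]]].
  { intro t. rewrite norm2_eq_sqr_norm. pose proof (norm_nonneg n (x t)).
    specialize (Hbd t). nra. }
  assert (HFcont : continuous_fun (Fval f P1 P2))
    by (apply continuous_Fval; [eapply has_gradient_continuous; exact Hf_diff | assumption..]).
  assert (Hcv : Un_cv a (Fval f P1 P2 l))
    by exact (Un_decreasing_subseq_cv a phi _ Hdec Hphi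
                (continuous_fun_seq n _ (fun k => x (phi k)) l HFcont Hcvx)).
  split; [exists M; exact Hbd|]. split; [split; [|split]|].
  - intro t. rewrite !HFbar. apply Hdec.
  - exists (Fval f P1 P2 l). intros eps Heps. destruct (Hcv eps Heps) as [N HN].
    exists N. intros t Ht. exists (a (S t)). split; [apply HFbar | apply HN; lia].
  - intros [|t] Ht; [lia|]. simpl pred. rewrite !HFbar. simpl. specialize (Hdescent (S t)). lra.
  - apply (Un_cv_0_of_sqr_le_diff a _ _ (c / 2) ltac:(lra) Hcv).
    + intro t. apply norm_nonneg.
    + intro t. rewrite <- norm2_eq_sqr_norm. apply Hdescent.
Qed.
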